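(* Let $\Gamma$ be a reduct of $\mathbb{P}$ in which $<$ and $\bot$ are primitive positive definable. Then the relation ${\rm Low}$ is primitive positive definable in $\Gamma$ if and only if every binary polymorphism of $\Gamma$ is dominated.
   Context: $\mathbb{P}=(P;\leq)$ is the random partial order (Fraïssé limit of all finite partial orders); a reduct of $\mathbb{P}$ is a structure on $P$ whose relations are first-order definable in $\mathbb{P}$. $x<y$ means $x\leq y\wedge x\neq y$; $x\bot y$ means $x,y$ incomparable; $z\bot xy$ abbreviates $z\bot x\wedge z\bot y$. ${\rm Low}(x,y,z):=(x<y\wedge z\bot xy)\vee(x<z\wedge y\bot xz)$. Primitive positive definable: definable by $\exists\bar y$ (conjunction of atomic formulas). A polymorphism is a finitary operation on $P$ preserving all relations of $\Gamma$ componentwise. A binary $f:P^2\to P$ is dominated on the first argument if $f(x,y)<f(x',y')$ whenever $x<x'$ and $f(x,y)\bot f(x',y')$ whenever $x\bot x'$ (for all $y,y'$); $f$ is dominated if $f$ or $(x,y)\mapsto f(y,x)$ is dominated on the first argument. *)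

From mathcomp Require Import all_boot.
From Stdlib Require Import List.
Set Implicit Arguments.
Unset Strict Implicit.
Unset Printing Implicit Defensive.

Section Defs.
Variables (P : Type) (le : P -> P -> Prop).

Definition lt (x y : P) : Prop := le x y /\ x <> y.
Definition incomp (x y : P) : Prop := ~ le x y /\ ~ le y x.

Definition is_partial_order : Prop :=
  (forall x, le x x) /\ (forall x y, le x y -> le y x -> x = y) /\
  (forall x y z, le x y -> le y z -> le x z).

(** (P; le) is the random partial order: the Fraisse limit of the class of
    all finite partial orders, i.e. a countable partial order whose age is
    the class of all finite partial orders and which is (ultra)homogeneous. *)
Definition random_partial_order : Prop :=
  is_partial_order /\
  (exists c : P -> nat, injective c) /\
  (forall (n : nat) (r : 'I_n -> 'I_n -> bool),
      (forall i, r i i) ->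
      (forall i j, r i j -> r j i -> i = j) ->
      (forall i j k, r i j -> r j k -> r i k) ->
      exists e : 'I_n -> P, injective e /\ forall i j, r i j <-> le (e i) (e j)) /\
  (forall (n : nat) (a b : 'I_n -> P),
      (forall i j, le (a i) (a j) <-> le (b i) (b j)) ->
      exists g : P -> P, bijective g /\ (forall x y, le x y <-> le (g x) (g y)) /\
        forall i, g (a i) = b i).

Inductive fo : Type :=
| FLe of nat & nat
| FEq of nat & nat
| FFalse
| FImp of fo & fo
| FAll of nat & fo.

Fixpoint fo_sat (env : nat -> P) (phi : fo) : Prop :=
  match phi with
  | FLe i j => le (env i) (env j)
  | FEq i j => env i = env j
  | FFalse => False
  | FImp p q => fo_sat env p -> fo_sat env q
  | FAll i p => forall x : P,
      fo_sat (fun j => if j == i then x else env j) p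
  end.

Definition fo_definable (n : nat) (S : ('I_n -> P) -> Prop) : Prop :=
  exists phi : fo, forall (x : 'I_n -> P) (env : nat -> P),
    (forall i : 'I_n, env i = x i) -> (S x <-> fo_sat env phi).

(** A structure Gamma on P is given by a signature I with arities ar and the
    relations R i. It is a reduct of (P; le) if all R i are FO-definable. *)
Definition reduct (I : Type) (ar : I -> nat)
  (R : forall i : I, ('I_(ar i) -> P) -> Prop) : Prop :=
  forall i, fo_definable (R i).

Inductive atom (I : Type) (ar : I -> nat) : Type :=
| AEq of nat & nat
| ARel (r : I) of ('I_(ar r) -> nat).

Definition atom_holds (I : Type) (ar : I -> nat)
  (R : forall i : I, ('I_(ar i) -> P) -> Prop) (v : nat -> P) (a : atom ar) : Prop :=
  match a with
  | AEq i j => v i = v j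
  | ARel r args => R r (fun k => v (args k))
  end.

(** S is primitive positive definable in Gamma: S(x_0..x_(k-1)) iff
    exists y-bar, conjunction of the atoms in l (variables >= k, and any
    others not among x_0..x_(k-1), are existentially quantified). *)
Definition pp_definable (I : Type) (ar : I -> nat)
  (R : forall i : I, ('I_(ar i) -> P) -> Prop)
  (k : nat) (S : ('I_k -> P) -> Prop) : Prop :=
  exists l : list (atom ar), forall x : 'I_k -> P,
    S x <-> exists v : nat -> P,
      (forall i : 'I_k, v i = x i) /\ (forall a, In a l -> atom_holds R v a).

Definition polymorphism (I : Type) (ar : I -> nat)
  (R : forall i : I, ('I_(ar i) -> P) -> Prop)
  (m : nat) (f : ('I_m -> P) -> P) : Prop :=
  forall (i : I) (t : 'I_m -> 'I_(ar i) -> P),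
    (forall j, R i (t j)) -> R i (fun c => f (fun j => t j c)).

Definition binary_polymorphism (I : Type) (ar : I -> nat)
  (R : forall i : I, ('I_(ar i) -> P) -> Prop) (f : P -> P -> P) : Prop :=
  polymorphism R (fun v : 'I_2 -> P => f (v ord0) (v ord_max)).

Definition dominated_first (f : P -> P -> P) : Prop :=
  forall x y x' y',
    (lt x x' -> lt (f x y) (f x' y')) /\
    (incomp x x' -> incomp (f x y) (f x' y')).

Definition dominated (f : P -> P -> P) : Prop :=
  dominated_first f \/ dominated_first (fun x y => f y x).

Definition LtRel (x : 'I_2 -> P) : Prop := lt (x ord0) (x ord_max).
Definition IncompRel (x : 'I_2 -> P) : Prop := incomp (x ord0) (x ord_max).

Definition Low (x y z : P) : Prop :=
  (lt x y /\ incomp z x /\ incomp z y) \/ (lt x z /\ incomp y x /\ incomp y z).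

Definition LowRel (t : 'I_3 -> P) : Prop :=
  Low (t (inord 0)) (t (inord 1)) (t (inord 2)).

End Defs.

From mathcomp Require Import all_boot.
From Stdlib Require Import List Classical ClassicalEpsilon FunctionalExtensionality.
Set Implicit Arguments.
Unset Strict Implicit.
Unset Printing Implicit Defensive.

(** (=>) A binary polymorphism f preserves < and Low.  Applying
    Low to triples (x, q1, c1) and (y, q2, c2) with x < q1, y _|_ q2, x _|_ c1,
    y < c2 shows that near each point (x, y) the operation f follows either
    its first or its second argument.  The extension property of the random
    partial order propagates this choice between any two points, and the
    global choice yields domination.
    (<=) If Low is not pp-definable, then for every n some map g on the first
    n pairs of an enumeration of P^2 preserves each atom of Gamma that holds
    on both coordinate sequences, yet sends the Low-triples (a,b,c), (a,c,b)
    outside Low: otherwise, choosing one violated atom for each of the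
    finitely many order types, homogeneity would make their conjunction a pp
    definition of Low.  Koenig's lemma glues these maps into a binary
    polymorphism, which is not dominated, since a dominated operation maps
    the two Low-triples into Low. *)

Definition truth (p : Prop) : bool := if excluded_middle_informative p then true else false.

Lemma truthP (p : Prop) : reflect p (truth p).
Proof. by rewrite /truth; case: excluded_middle_informative => h; constructor. Qed.

Lemma mem_In (T : eqType) (x : T) (s : list T) : x \in s -> List.In x s.
Proof. elim: s => //= y s IH; rewrite inE => /orP [/eqP ->|/IH]; auto. Qed.

Lemma finite_antitone_witness (T : finType) (Q : nat -> T -> Prop) :
  (forall m m' t, (m <= m')%N -> Q m' t -> Q m t) -> (forall m, exists t, Q m t) ->
  exists t, forall m, Q m t.
Proof.
move=> Q_anti Q_ex; apply: NNPP => N.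
have H t : exists m, ~ Q m t.
  by apply: not_all_ex_not => A; apply: N; exists t.
pose M t := proj1_sig (constructive_indefinite_description _ (H t)).
have [t Qt] := Q_ex (\max_(t : T) M t).
apply: (proj2_sig (constructive_indefinite_description _ (H t))).
apply: Q_anti Qt; exact: (@leq_bigmax T M t).
Qed.

Definition triple (T : Type) (u v w : T) (k : nat) : T :=
  match k with 0 => u | 1 => v | _ => w end.

(** * Automorphisms and primitive positive definitions *)

Section Reducts.
Variables (P : Type) (le : P -> P -> Prop).

Definition is_aut (g : P -> P) := bijective g /\ forall x y, le x y <-> le (g x) (g y).

Lemma fo_sat_ext env env' phi : (forall j, env j = env' j) ->
  (fo_sat le env phi <-> fo_sat le env' phi).
Proof.
elim: phi env env' => [i j|i j||p IHp q IHq|i p IH] env env' E /=; rewrite ?E //.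
- by rewrite (IHp _ _ E) (IHq _ _ E).
- have E' x j : (if j == i then x else env j) = (if j == i then x else env' j).
    by case: (j == i).
  by split=> H x; apply/(IH _ _ (E' x)).
Qed.

Lemma fo_sat_aut g : is_aut g -> forall phi env,
  fo_sat le env phi <-> fo_sat le (fun j => g (env j)) phi.
Proof.
move=> [[g' gK g'K] g_le]; have g_inj := can_inj gK.
elim=> [i j|i j||p IHp q IHq|i p IH] env /=.
- exact: g_le.
- by split=> [->|/g_inj].
- by [].
- by rewrite (IHp env) (IHq env).
- have E x j : g (if j == i then x else env j) = (if j == i then g x else g (env j)).
    by case: (j == i).
  split=> H x.
  + by rewrite -[x]g'K; apply/(fo_sat_ext p (E _)); apply: (proj1 (IH _)) (H _).
  + by apply/IH/(fo_sat_ext p (E _)).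
Qed.

Lemma Low_aut_reflect g x y z : is_aut g -> Low le (g x) (g y) (g z) -> Low le x y z.
Proof.
move=> [_ g_le].
have lt_reflect u v : lt le (g u) (g v) -> lt le u v.
  by move=> [h n]; split=> [|E]; [apply/g_le | apply: n; rewrite E].
have incomp_reflect u v : incomp le (g u) (g v) -> incomp le u v.
  by move=> [h1 h2]; split=> /g_le.
by case=> [[? [? ?]]|[? [? ?]]]; [left | right];
  (split; [apply: lt_reflect | split; apply: incomp_reflect]).
Qed.

Unset Implicit Arguments.
Variables (I : Type) (ar : I -> nat) (R : forall i : I, ('I_(ar i) -> P) -> Prop).
Set Implicit Arguments.

Lemma reduct_aut (Hred : reduct le R) (p0 : P) g : is_aut g ->
  forall (i : I) (x : 'I_(ar i) -> P), R i x -> R i (fun k => g (x k)).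
Proof.
move=> g_aut i x Rx; have [phi Hphi] := Hred i.
pose env j := if insub j is Some k then x k else p0.
have env_x (k : 'I_(ar i)) : env k = x k by rewrite /env valK.
have genv_gx (k : 'I_(ar i)) : g (env k) = g (x k) by rewrite env_x.
apply/(Hphi _ (fun j => g (env j)) genv_gx); apply: (proj1 (fo_sat_aut g_aut phi env)).
exact/(Hphi _ _ env_x).
Qed.

Definition atom_below (n : nat) (t : atom ar) : Prop :=
  match t with AEq i j => (i < n /\ j < n)%N | ARel r args => forall k, (args k < n)%N end.

Lemma atom_below_mono n n' t : (n <= n')%N -> atom_below n t -> atom_below n' t.
Proof.
move=> nn'; case: t => [i j|r args] /=; first by case=> ??; split; apply: leq_trans nn'.
by move=> H k; apply: leq_trans (H k) nn'.
Qed.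

Lemma exists_atom_below t : exists n, atom_below n t.
Proof.
case: t => [i j|r args] /=.
- by exists (maxn i j).+1; rewrite !ltnS leq_maxl leq_maxr.
- by exists (\max_(k : 'I_(ar r)) args k).+1 => k; rewrite ltnS (@leq_bigmax _ args k).
Qed.

Lemma atom_holds_eq_on n v w t : atom_below n t -> (forall i, (i < n)%N -> v i = w i) ->
  atom_holds R v t -> atom_holds R w t.
Proof.
case: t => [i j|r args] /= t_below E; first by case: t_below => ? ?; rewrite -!E.
by have -> : (fun k => w (args k)) = (fun k => v (args k))
  by apply: functional_extensionality => k; rewrite E.
Qed.

Lemma atom_holds_aut (Hred : reduct le R) (p0 : P) g v t : is_aut g ->
  atom_holds R v t -> atom_holds R (fun k => g (v k)) t.
Proof. by move=> g_aut; case: t => [i j|r args] /=; [move-> | apply: reduct_aut]. Qed.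

Lemma pp_definable_preserved k S m F : pp_definable R S -> polymorphism R (m := m) F ->
  forall t : 'I_m -> 'I_k -> P, (forall j, S (t j)) -> S (fun c => F (fun j => t j c)).
Proof.
move=> [l Hl] F_pol t St.
have W j : exists v : nat -> P, (forall i : 'I_k, v i = t j i) /\
    (forall a, List.In a l -> atom_holds R v a) by apply/Hl.
pose V j := proj1_sig (constructive_indefinite_description _ (W j)).
have HV j : (forall i : 'I_k, V j i = t j i) /\ (forall a, List.In a l -> atom_holds R (V j) a).
  exact: (proj2_sig (constructive_indefinite_description _ (W j))).
apply/Hl; exists (fun n => F (fun j => V j n)); split.
- by move=> i; congr F; apply: functional_extensionality => j; apply: (HV j).1.
- move=> [i i'|r args] Hin /=.
  + by congr F; apply: functional_extensionality => j; apply: ((HV j).2 _ Hin).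
  + by apply: (F_pol r (fun j c => V j (args c))) => j; apply: ((HV j).2 _ Hin).
Qed.

Lemma binary_polymorphism_preserved k S f : pp_definable R S -> binary_polymorphism R f ->
  forall s t : 'I_k -> P, S s -> S t -> S (fun c => f (s c) (t c)).
Proof.
move=> S_pp f_pol s t Ss St.
by apply: (pp_definable_preserved S_pp f_pol
  (t := fun j => if val j == 0 then s else t)) => -[[|[|]]].
Qed.

Lemma binary_polymorphism_lt f : pp_definable R (LtRel le) -> binary_polymorphism R f ->
  forall x y x' y', lt le x x' -> lt le y y' -> lt le (f x y) (f x' y').
Proof.
move=> Lt_pp f_pol x y x' y' xx' yy'.
exact: (binary_polymorphism_preserved Lt_pp f_pol
  (s := fun i : 'I_2 => if val i == 0 then x else x')
  (t := fun i : 'I_2 => if val i == 0 then y else y')).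
Qed.

Lemma binary_polymorphism_Low f : pp_definable R (LowRel le) -> binary_polymorphism R f ->
  forall x1 x2 x3 y1 y2 y3, Low le x1 x2 x3 -> Low le y1 y2 y3 ->
  Low le (f x1 y1) (f x2 y2) (f x3 y3).
Proof.
move=> Low_pp f_pol x1 x2 x3 y1 y2 y3 Lx Ly.
have := binary_polymorphism_preserved Low_pp f_pol
  (s := fun i : 'I_3 => triple x1 x2 x3 i) (t := fun i : 'I_3 => triple y1 y2 y3 i).
by rewrite /LowRel !inordK //; apply.
Qed.

End Reducts.

(** * The random partial order *)

Section RandomPartialOrder.
Variables (P : Type) (le : P -> P -> Prop) (HP : random_partial_order le).
Local Notation LT := (lt le).
Local Notation IC := (incomp le).

Lemma le_refl x : le x x.
Proof. by case: HP => [[H _] _]. Qed.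
Lemma le_anti x y : le x y -> le y x -> x = y.
Proof. by case: HP => [[_ [H _]] _]; apply: H. Qed.
Lemma le_trans x y z : le x y -> le y z -> le x z.
Proof. by case: HP => [[_ [_ H]] _]; apply: H. Qed.

Lemma le_lt_trans x y z : le x y -> LT y z -> LT x z.
Proof.
move=> hxy [hyz nyz]; split; first exact: le_trans hxy hyz.
by move=> E; subst z; apply: nyz; apply: le_anti hyz hxy.
Qed.
Lemma lt_trans x y z : LT x y -> LT y z -> LT x z.
Proof. by move=> [hxy _]; apply: le_lt_trans. Qed.
Lemma lt_nle x y : LT x y -> ~ le y x.
Proof. by move=> [h n] h'; apply: n; apply: le_anti h h'. Qed.
Lemma incompC x y : IC x y -> IC y x.
Proof. by case. Qed.
Lemma lt_incompF x y : LT x y -> IC x y -> False.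
Proof. by move=> [h _] [h' _]. Qed.

Lemma rpo_embedding (n : nat) (r : 'I_n -> 'I_n -> bool) :
  (forall i, r i i) -> (forall i j, r i j -> r j i -> i = j) ->
  (forall i j k, r i j -> r j k -> r i k) ->
  exists e : 'I_n -> P, injective e /\ forall i j, r i j <-> le (e i) (e j).
Proof. by case: HP => [_ [_ [H _]]]; apply: H. Qed.

Lemma rpo_homogeneous (n : nat) (a b : 'I_n -> P) :
  (forall i j, le (a i) (a j) <-> le (b i) (b j)) ->
  exists g : P -> P, bijective g /\ (forall x y, le x y <-> le (g x) (g y)) /\
    forall i, g (a i) = b i.
Proof. by case: HP => [_ [_ [_ H]]]; apply: H. Qed.

Lemma rpo_inhabited : inhabited P.
Proof.
have [e _] := @rpo_embedding 1 (fun _ _ => true) (fun _ => erefl)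
  (fun i j _ _ => etrans (ord1 i) (esym (ord1 j))) (fun _ _ _ _ _ => erefl).
exact: inhabits (e ord0).
Qed.

Lemma homogeneous_on n (g h : nat -> P) :
  (forall i j, (i < n)%N -> (j < n)%N -> (le (g i) (g j) <-> le (h i) (h j))) ->
  exists al, is_aut le al /\ forall i, (i < n)%N -> al (g i) = h i.
Proof.
move=> gh.
have [al [al_bij [al_le E]]] := @rpo_homogeneous n (fun i : 'I_n => g i)
  (fun i : 'I_n => h i) (fun i j => gh i j (ltn_ord i) (ltn_ord j)).
by exists al; split=> [|i ni]; [split | apply: (E (Ordinal ni))].
Qed.

Lemma triple_le u v w : LT u v -> IC w u -> IC w v ->
  forall i j, (i < 3)%N -> (j < 3)%N ->
  (le (triple u v w i) (triple u v w j) <-> (i == j) || (i == 0) && (j == 1)).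
Proof.
move=> uv [wu uw] [wv vw] [|[|[|i]]] [|[|[|j]]] //= _ _; split=> //;
  by [move=> _; apply: le_refl | move=> _; case: uv | move/(lt_nle uv)].
Qed.

Lemma lt_incomp_triple_aut u v w u' v' w' :
  LT u v -> IC w u -> IC w v -> LT u' v' -> IC w' u' -> IC w' v' ->
  exists al, is_aut le al /\ al u = u' /\ al v = v' /\ al w = w'.
Proof.
move=> uv wu wv uv' wu' wv'.
have [al [al_aut E]] := @homogeneous_on 3 (triple u v w) (triple u' v' w')
  (fun i j hi hj => iff_trans (triple_le uv wu wv hi hj) (iff_sym (triple_le uv' wu' wv' hi hj))).
by exists al; split; [|split; [|split]]; [| apply: (E 0) | apply: (E 1) | apply: (E 2)].
Qed.

Section OnePointExtension.
Variables (n : nat) (a : 'I_n -> P) (D U : 'I_n -> Prop).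
Hypothesis D_lt_U : forall d u, D d -> U u -> LT (a d) (a u).

(* The extension, ordered on indices: [None] is the new point, and indices
   with equal values under [a] are ordered by rank to get antisymmetry; [rep]
   then collapses them again so that the embedded copy has the type of [a]. *)
Definition ext_le (o1 o2 : option 'I_n) : Prop :=
  match o1, o2 with
  | Some i, Some j => le (a i) (a j) /\ (a i = a j -> (val i <= val j)%N)
  | Some i, None => exists d, D d /\ le (a i) (a d)
  | None, Some j => exists u, U u /\ le (a u) (a j)
  | None, None => True
  end.

Lemma ext_le_refl o : ext_le o o.
Proof. by case: o => [i|] //=; split; [apply: le_refl|]. Qed.

Lemma ext_le_anti o1 o2 : ext_le o1 o2 -> ext_le o2 o1 -> o1 = o2.
Proof.
case: o1 => [i|]; case: o2 => [j|] //=.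
- move=> [h1 h2] [h3 h4]; have E := le_anti h1 h3.
  by congr Some; apply: val_inj; apply/eqP; rewrite eqn_leq h2 // h4.
- by move=> [d [Dd h1]] [u [Uu h2]]; case: (lt_nle (D_lt_U Dd Uu)); apply: le_trans h2 h1.
- by move=> [u [Uu h2]] [d [Dd h1]]; case: (lt_nle (D_lt_U Dd Uu)); apply: le_trans h2 h1.
Qed.

Lemma ext_le_trans o1 o2 o3 : ext_le o1 o2 -> ext_le o2 o3 -> ext_le o1 o3.
Proof.
case: o1 => [i|]; case: o2 => [j|]; case: o3 => [k|] //=.
- move=> [h1 h2] [h3 h4]; split; first exact: le_trans h1 h3.
  move=> E; have E1 : a i = a j by apply: (le_anti h1); rewrite E.
  have E2 : a j = a k by rewrite -E1.
  exact: leq_trans (h2 E1) (h4 E2).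
- move=> [h1 _] [d [Dd h]]; exists d; split => //; exact: le_trans h1 h.
- move=> [d [Dd h1]] [u [Uu h2]]; have du := D_lt_U Dd Uu.
  split; first exact: le_trans (le_trans h1 du.1) h2.
  by move=> E; case: (lt_nle du); apply: le_trans h2 _; rewrite -E.
- move=> [u [Uu h2]] [h3 _]; exists u; split => //; exact: le_trans h2 h3.
Qed.

Definition ext_leb (i j : 'I_n.+1) : bool :=
  truth (ext_le (unlift ord_max i) (unlift ord_max j)).

Lemma unlift_max_inj (i j : 'I_n.+1) : unlift ord_max i = unlift ord_max j -> i = j.
Proof.
case: (unliftP ord_max i) => [i' ->|->]; case: (unliftP ord_max j) => [j' ->|->] //.
by case=> ->.
Qed.

Definition rep (i : 'I_n) : 'I_n := [arg min_(j < i | truth (a j = a i)) val j].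

Lemma rep_val i : a (rep i) = a i.
Proof. by rewrite /rep; case: arg_minnP => [|j /truthP]; first exact/truthP. Qed.

Lemma rep_eq i j : a i = a j -> rep i = rep j.
Proof.
move=> E; rewrite /rep.
case: arg_minnP; first exact/truthP. move=> k /truthP Hk Mk.
case: arg_minnP; first exact/truthP. move=> l /truthP Hl Ml.
apply: val_inj; apply/eqP; rewrite eqn_leq.
by rewrite Mk ?Ml //; apply/truthP; rewrite ?Hk ?Hl.
Qed.

Lemma one_point_extension : exists z,
  (forall i, le (a i) z <-> exists d, D d /\ le (a i) (a d)) /\
  (forall i, le z (a i) <-> exists u, U u /\ le (a u) (a i)).
Proof.
have [e [_ He]] := @rpo_embedding n.+1 ext_leb
  (fun i => introT (truthP _) (ext_le_refl _))
  (fun i j h1 h2 => unlift_max_inj (ext_le_anti (elimT (truthP _) h1) (elimT (truthP _) h2)))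
  (fun i j k h1 h2 => introT (truthP _) (ext_le_trans (elimT (truthP _) h1) (elimT (truthP _) h2))).
pose b i := e (lift ord_max (rep i)).
have Hb i j : le (b i) (b j) <-> le (a i) (a j).
  rewrite /b -He /ext_leb !liftK /= !rep_val; split; first by move/truthP => [].
  by move=> h; apply/truthP; split=> // E; rewrite (rep_eq E).
have [g [_ [gle gba]]] := @rpo_homogeneous n b a Hb.
exists (g (e ord_max)); split => i; rewrite -{1}gba -gle /b -He /ext_leb liftK unlift_none /=;
  rewrite rep_val; split; by [move/truthP | move=> h; apply/truthP].
Qed.
End OnePointExtension.

Lemma one_point_extension_strict n (a : 'I_n -> P) (D U : 'I_n -> Prop) :
  (forall d u, D d -> U u -> LT (a d) (a u)) ->
  exists z, (forall d, D d -> LT (a d) z) /\ (forall u, U u -> LT z (a u)) /\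
    (forall i, (forall d, D d -> ~ le (a i) (a d)) -> ~ le (a i) z) /\
    (forall i, (forall u, U u -> ~ le (a u) (a i)) -> ~ le z (a i)).
Proof.
move=> D_lt_U; have [z [Hd Hu]] := one_point_extension D_lt_U.
exists z; split; [|split; [|split]].
- move=> d Dd; split; first by apply/Hd; exists d; split=> //; apply: le_refl.
  move=> E; have /Hu [u [Uu h]] : le z (a d) by rewrite E; apply: le_refl.
  by case: (lt_nle (D_lt_U _ _ Dd Uu)).
- move=> u Uu; split; first by apply/Hu; exists u; split=> //; apply: le_refl.
  move=> E; have /Hd [d [Dd h]] : le (a u) z by rewrite E; apply: le_refl.
  by case: (lt_nle (D_lt_U _ _ Dd Uu)).
- by move=> i N /Hd [d [Dd h]]; apply: (N d).
- by move=> i N /Hu [u [Uu h]]; apply: (N u).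
Qed.

Definition quad (p q r s : P) (i : 'I_4) : P :=
  match val i with 0 => p | 1 => q | 2 => r | _ => s end.

Lemma exists_incomp3 p q r : exists w, IC w p /\ IC w q /\ IC w r.
Proof.
have [z [_ [_ [ND NU]]]] := @one_point_extension_strict 4 (quad p q r r)
  (fun _ => False) (fun _ => False) (fun _ _ f _ => False_ind _ f).
have K i : IC z (quad p q r r i) by split; [apply: NU | apply: ND].
exists z; exact: (conj (K (@Ordinal 4 0 isT)) (conj (K (@Ordinal 4 1 isT)) (K (@Ordinal 4 2 isT)))).
Qed.

Lemma exists_above_avoiding p q r s : ~ le r p -> ~ le r q -> ~ le s p -> ~ le s q ->
  exists w, LT p w /\ LT q w /\ IC w r /\ IC w s.
Proof.
move=> rp rq sp sq.
have [z [LTz [_ [ND NU]]]] := @one_point_extension_strict 4 (quad p q r s)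
  (fun i => (val i < 2)%N) (fun _ => False) (fun _ _ _ f => False_ind _ f).
have NUz i : ~ le z (quad p q r s i) by apply: NU.
have NDr : ~ le r z by apply: (ND (@Ordinal 4 2 isT)) => -[[|[|d]] ?].
have NDs : ~ le s z by apply: (ND (@Ordinal 4 3 isT)) => -[[|[|d]] ?].
exists z; split; first exact: (LTz (@Ordinal 4 0 isT)).
split; first exact: (LTz (@Ordinal 4 1 isT)).
by split; split; [apply: (NUz (@Ordinal 4 2 isT)) | | apply: (NUz (@Ordinal 4 3 isT)) |].
Qed.

Lemma exists_upper_bound p q : exists w, LT p w /\ LT q w.
Proof.
have [r [[rp _] [[rq _] _]]] := exists_incomp3 p q q.
by have [w [pw [qw _]]] := exists_above_avoiding rp rq rp rq; exists w.
Qed.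

Lemma exists_lower_bound p q : exists w, LT w p /\ LT w q.
Proof.
have [z [_ [LTz _]]] := @one_point_extension_strict 4 (quad p q q q)
  (fun _ => False) (fun i => (val i < 2)%N) (fun _ _ f _ => False_ind _ f).
by exists z; split; [apply: (LTz (@Ordinal 4 0 isT)) | apply: (LTz (@Ordinal 4 1 isT))].
Qed.

Lemma exists_between p q : LT p q -> exists w, LT p w /\ LT w q.
Proof.
move=> pq.
have D_lt_U (d u : 'I_4) : val d = 0 -> val u = 1 -> LT (quad p q q q d) (quad p q q q u).
  by case: d u => [[|d] ?] [[|[|u]] ?].
have [z [LTd [LTu _]]] := one_point_extension_strict D_lt_U.
by exists z; split; [apply: (LTd (@Ordinal 4 0 isT)) | apply: (LTu (@Ordinal 4 1 isT))].
Qed.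

(** * Polymorphisms preserving < and Low are dominated *)

Definition first_wins (f : P -> P -> P) x y :=
  (forall x' y', LT x x' -> IC y y' -> LT (f x y) (f x' y')) /\
  (forall x' y', IC x x' -> LT y y' -> IC (f x y) (f x' y')).
Definition second_wins (f : P -> P -> P) x y :=
  (forall x' y', LT x x' -> IC y y' -> IC (f x y) (f x' y')) /\
  (forall x' y', IC x x' -> LT y y' -> LT (f x y) (f x' y')).

Lemma second_wins_swap f x y : second_wins f x y -> first_wins (fun u v => f v u) y x.
Proof. by move=> [h1 h2]; split=> y' x' ? ?; [apply: h2 | apply: h1]. Qed.

Lemma first_wins_dominated_first f :
  (forall x y, first_wins f x y) -> dominated_first le f.
Proof.
move=> W.
have f_lt x y x' y' : LT x x' -> LT (f x y) (f x' y').
  move=> xx'; have [x'' [xx'' x''x']] := exists_between xx'.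
  have [y'' [y''y [y''y' _]]] := exists_incomp3 y y' y'.
  apply: (lt_trans ((W x y).1 x'' y'' xx'' (incompC y''y))).
  exact: (W x'' y'').1 x' y' x''x' y''y'.
have f_nle x y x' y' : IC x x' -> ~ le (f x y) (f x' y').
  move=> [n1 n2] hle.
  have [x'' [x'x'' [_ [x''x _]]]] := exists_above_avoiding n1 n1 n1 n1.
  have [y'' [y''y y''y']] := exists_upper_bound y y'.
  apply: (lt_incompF (le_lt_trans hle (f_lt x' y' x'' y'' x'x''))).
  exact: (W x y).2 x'' y'' (incompC x''x) y''y.
move=> x y x' y'; split; first exact: f_lt.
by move=> hi; split; [apply: f_nle | apply: f_nle (incompC hi)].
Qed.

Lemma dominated_Low f x1 x2 x3 y1 y2 y3 : dominated le f ->
  LT x1 x2 -> IC x3 x1 -> IC x3 x2 -> LT y1 y3 -> IC y2 y1 -> IC y2 y3 ->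
  Low le (f x1 y1) (f x2 y2) (f x3 y3).
Proof.
move=> [D|D] x12 x31 x32 y13 y21 y23; [left | right]; split.
- exact: (D x1 y1 x2 y2).1.
- by split; [apply: (D x3 y3 x1 y1).2 | apply: (D x3 y3 x2 y2).2].
- exact: (D y1 x1 y3 x3).1.
- by split; [apply: (D y2 x2 y1 x1).2 | apply: (D y2 x2 y3 x3).2].
Qed.

Section PreservingLtLow.
Variable f : P -> P -> P.
Hypothesis f_lt : forall x y x' y', LT x x' -> LT y y' -> LT (f x y) (f x' y').
Hypothesis f_Low : forall x1 x2 x3 y1 y2 y3, Low le x1 x2 x3 -> Low le y1 y2 y3 ->
  Low le (f x1 y1) (f x2 y2) (f x3 y3).

Definition wins_at x y q1 q2 c1 c2 :=
  (LT (f x y) (f q1 q2) /\ IC (f x y) (f c1 c2)) \/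
  (IC (f x y) (f q1 q2) /\ LT (f x y) (f c1 c2)).

Lemma wins_at_of_incomp x y q1 q2 c1 c2 : LT x q1 -> IC y q2 -> IC x c1 -> LT y c2 ->
  IC c1 q1 -> IC q2 c2 -> wins_at x y q1 q2 c1 c2.
Proof.
move=> xq1 yq2 xc1 yc2 c1q1 q2c2.
have L1 : Low le x q1 c1 by left; split=> //; split=> //; apply: incompC.
have L2 : Low le y q2 c2 by right; split=> //; split=> //; apply: incompC.
by case: (f_Low L1 L2) => [[? [? ?]]|[? [? ?]]]; [left | right]; split=> //; apply: incompC.
Qed.

Ltac lt_incomp_contra := match goal with
  H1 : lt _ ?x ?y, H2 : incomp _ ?x ?y |- _ => exact: False_ind (lt_incompF H1 H2) end.

(* Without the side conditions [IC c1 q1] and [IC q2 c2]: connect the two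
   configurations through a third one that satisfies them with either. *)
Lemma wins_at_all x y q1 q2 c1 c2 : LT x q1 -> IC y q2 -> IC x c1 -> LT y c2 ->
  wins_at x y q1 q2 c1 c2.
Proof.
move=> xq1 yq2 xc1 yc2.
have [c1' [c1'x [c1'q1 _]]] := exists_incomp3 x q1 q1.
have [c2' [yc2' [_ [c2'q2 _]]]] := exists_above_avoiding yq2.2 yq2.2 yq2.2 yq2.2.
have [q1' [xq1' [_ [q1'c1 q1'c1']]]] := exists_above_avoiding xc1.2 xc1.2 c1'x.1 c1'x.1.
have [q2' [q2'y [q2'c2 q2'c2']]] := exists_incomp3 y c2 c2'.
have W1 := wins_at_of_incomp xq1 yq2 (incompC c1'x) yc2' c1'q1 (incompC c2'q2).
have W2 := wins_at_of_incomp xq1' (incompC q2'y) (incompC c1'x) yc2' (incompC q1'c1') q2'c2'.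
have W3 := wins_at_of_incomp xq1' (incompC q2'y) xc1 yc2 (incompC q1'c1) q2'c2.
move: W1 W2 W3; rewrite /wins_at.
move=> [[? ?]|[? ?]] [[? ?]|[? ?]] [[? ?]|[? ?]];
  solve [left; split; assumption | right; split; assumption | lt_incomp_contra].
Qed.

Lemma first_or_second_wins x y : first_wins f x y \/ second_wins f x y.
Proof.
have [q1 [xq1 _]] := exists_upper_bound x x.
have [q2 [q2y _]] := exists_incomp3 y y y.
have [c1 [c1x _]] := exists_incomp3 x x x.
have [c2 [yc2 _]] := exists_upper_bound y y.
have [[? ?]|[? ?]] := wins_at_all xq1 (incompC q2y) (incompC c1x) yc2; [left | right];
  split=> x' y' h1 h2;
  first [case: (wins_at_all h1 h2 (incompC c1x) yc2) | case: (wins_at_all xq1 (incompC q2y) h1 h2)];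
  move=> [? ?] //; lt_incomp_contra.
Qed.

Lemma first_second_winsF x y : first_wins f x y -> second_wins f x y -> False.
Proof.
have [q1 [xq1 _]] := exists_upper_bound x x.
have [q2 [q2y _]] := exists_incomp3 y y y.
move=> [W1 _] [W2 _]; exact: lt_incompF (W1 _ _ xq1 (incompC q2y)) (W2 _ _ xq1 (incompC q2y)).
Qed.

Lemma first_wins_below x y r1 r2 : LT r1 x -> LT r2 y -> first_wins f x y -> first_wins f r1 r2.
Proof.
move=> r1x r2y W; case: (first_or_second_wins r1 r2) => // W'; exfalso.
have [q1 [xq1 _]] := exists_upper_bound x x.
have [q2 [q2y [q2r2 _]]] := exists_incomp3 y r2 r2.
have A := W.1 q1 q2 xq1 (incompC q2y).
have C := W'.1 q1 q2 (lt_trans r1x xq1) (incompC q2r2).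
exact: lt_incompF (lt_trans (f_lt r1x r2y) A) C.
Qed.

Lemma second_wins_below x y r1 r2 : LT r1 x -> LT r2 y -> second_wins f x y -> second_wins f r1 r2.
Proof.
move=> r1x r2y W; case: (first_or_second_wins r1 r2) => // W'; exfalso.
have [c1 [c1x [c1r1 _]]] := exists_incomp3 x r1 r1.
have [c2 [yc2 _]] := exists_upper_bound y y.
have A := W.2 c1 c2 (incompC c1x) yc2.
have C := W'.2 c1 c2 (incompC c1r1) (lt_trans r2y yc2).
exact: lt_incompF (lt_trans (f_lt r1x r2y) A) C.
Qed.

Lemma first_wins_below_iff x y r1 r2 : LT r1 x -> LT r2 y ->
  first_wins f x y <-> first_wins f r1 r2.
Proof.
move=> r1x r2y; split; first exact: first_wins_below.
move=> W; case: (first_or_second_wins x y) => // W'; exfalso.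
exact: first_second_winsF W (second_wins_below r1x r2y W').
Qed.

Lemma first_wins_anywhere x y x' y' : first_wins f x y -> first_wins f x' y'.
Proof.
have [r1 [r1x r1x']] := exists_lower_bound x x'.
have [r2 [r2y r2y']] := exists_lower_bound y y'.
by move=> W; apply/(first_wins_below_iff r1x' r2y'); apply/(first_wins_below_iff r1x r2y).
Qed.

Lemma preserving_lt_Low_dominated : dominated le f.
Proof.
case: (classic (exists x y, first_wins f x y)) => [[x [y W]]|N].
- by left; apply: first_wins_dominated_first => x' y'; apply: first_wins_anywhere W.
- right; apply: first_wins_dominated_first => y' x'; apply: second_wins_swap.
  by case: (first_or_second_wins x' y') => // W; case: N; exists x', y'.
Qed.
End PreservingLtLow.

End RandomPartialOrder.

(** * A polymorphism violating Low *)

Section LowRefutingPolymorphism.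
Variables (P : Type) (le : P -> P -> Prop) (HP : random_partial_order le).
Local Notation LT := (lt le).
Local Notation IC := (incomp le).
Unset Implicit Arguments.
Variables (I : Type) (ar : I -> nat) (R : forall i : I, ('I_(ar i) -> P) -> Prop).
Set Implicit Arguments.
Hypothesis Hred : reduct le R.
Variables (a b c : P).
Hypotheses (ab : LT a b) (ca : IC c a) (cb : IC c b).
Variable cnt : P -> nat.
Hypothesis cnt_inj : injective cnt.

Definition pair_code (pr : P * P) : nat := pickle (cnt pr.1, cnt pr.2).
Definition pair_decode (k : nat) : P * P :=
  epsilon (inhabits (a, a)) (fun pr => pair_code pr = k).

Lemma pair_codeK : cancel pair_code pair_decode.
Proof.
move=> pr; have := epsilon_spec (inhabits (a, a)) (fun q => pair_code q = pair_code pr)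
  (ex_intro _ pr erefl).
rewrite -/(pair_decode _) /pair_code => /(pcan_inj pickleK) [] /cnt_inj E1 /cnt_inj E2.
by case: pr E1 E2 => x y /=; case: (pair_decode _) => u v /= -> ->.
Qed.

(* The pairs [(arg1 k, arg2 k)] enumerate [P * P], starting with [(a, a)],
   [(b, c)] and [(c, b)]; a map [g : nat -> P] stands for the partial binary
   operation [(arg1 k, arg2 k) |-> g k]. *)
Definition arg1 (k : nat) : P :=
  match k with 0 => a | 1 => b | 2 => c | k'.+3 => (pair_decode k').1 end.
Definition arg2 (k : nat) : P :=
  match k with 0 => a | 1 => c | 2 => b | k'.+3 => (pair_decode k').2 end.

Definition refuting n (g : nat -> P) :=
  (forall t, atom_below n.+3 t -> atom_holds R arg1 t -> atom_holds R arg2 t ->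
     atom_holds R g t) /\
  ~ Low le (g 0) (g 1) (g 2).

Definition same_type n (g h : nat -> P) :=
  forall i j, (i < n.+3)%N -> (j < n.+3)%N -> (le (g i) (g j) <-> le (h i) (h j)).

Definition order_pattern m (g : nat -> P) : {ffun 'I_m * 'I_m -> bool} :=
  [ffun ij : 'I_m * 'I_m => truth (le (g ij.1) (g ij.2))].

Lemma order_pattern_le m g h : order_pattern m g = order_pattern m h ->
  forall i j, (i < m)%N -> (j < m)%N -> (le (g i) (g j) <-> le (h i) (h j)).
Proof.
move=> E i j im jm.
have := congr1 (fun F : {ffun 'I_m * 'I_m -> bool} => F (Ordinal im, Ordinal jm)) E.
by rewrite !ffunE /=; do 2 case: truthP.
Qed.

Lemma same_type_sym n g h : same_type n g h -> same_type n h g.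
Proof. by move=> gh i j im jm; rewrite gh. Qed.

Lemma refuting_mono n n' g : (n <= n')%N -> refuting n' g -> refuting n g.
Proof.
move=> nn' [g_atoms g_Low]; split=> // t t_below; apply: g_atoms.
by apply: atom_below_mono t_below; rewrite !ltnS.
Qed.

Lemma refuting_same_type n g h : same_type n g h -> refuting n g -> refuting n h.
Proof.
move=> gh [g_atoms g_Low]; have [al [al_aut E]] := homogeneous_on HP gh.
split=> [t t_below h1 h2 | L].
- apply: (atom_holds_eq_on t_below E).
  exact: (atom_holds_aut Hred a al_aut (g_atoms t t_below h1 h2)).
- by apply: g_Low; apply: (Low_aut_reflect al_aut); rewrite !E.
Qed.

Lemma Low_arg_image (h : nat -> P) : Low le (h 0) (h 1) (h 2) ->
  exists s al, (s = arg1 \/ s = arg2) /\ is_aut le al /\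
    forall i, (i < 3)%N -> al (s i) = h i.
Proof.
case=> [[h01 [h20 h21]]|[h02 [h10 h12]]].
- have [al [al_aut [Ea [Eb Ec]]]] := lt_incomp_triple_aut HP ab ca cb h01 h20 h21.
  by exists arg1, al; split; [left | split=> // -[|[|[|i]]]].
- have [al [al_aut [Ea [Eb Ec]]]] := lt_incomp_triple_aut HP ab ca cb h02 h10 h12.
  by exists arg2, al; split; [right | split=> // -[|[|[|i]]]].
Qed.

Section Approximation.
Hypothesis not_pp_Low : ~ pp_definable R (LowRel le).
Variable n : nat.
Local Notation m := n.+3.

Definition violated (pi : {ffun 'I_m * 'I_m -> bool}) (t : atom ar) :=
  exists g, order_pattern m g = pi /\ atom_below m t /\ atom_holds R arg1 t /\
    atom_holds R arg2 t /\ ~ atom_holds R g t.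

Definition violated_atom (pi : {ffun 'I_m * 'I_m -> bool}) : atom ar :=
  match excluded_middle_informative (exists t, violated pi t) with
  | left H => proj1_sig (constructive_indefinite_description _ H)
  | right _ => AEq ar 0 0
  end.

Lemma violated_atomP pi :
  atom_below m (violated_atom pi) /\ atom_holds R arg1 (violated_atom pi) /\
  atom_holds R arg2 (violated_atom pi) /\
  ((exists t, violated pi t) ->
     exists g, order_pattern m g = pi /\ ~ atom_holds R g (violated_atom pi)).
Proof.
rewrite /violated_atom; case: excluded_middle_informative => [H|H] //.
case: constructive_indefinite_description => t [g [E [h1 [h2 [h3 h4]]]]] /=.
by do 3 split=> //; exists g.
Qed.

(* One atom per order type of [n + 3] points.  Their conjunction holds on the
   Low-triples but cannot define Low, and a non-Low solution is refuting. *)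
Definition violated_atoms := List.map violated_atom (enum {ffun 'I_m * 'I_m -> bool}).

Lemma violated_atoms_hold t : List.In t violated_atoms ->
  atom_holds R arg1 t /\ atom_holds R arg2 t.
Proof.
by case/List.in_map_iff => pi [<- _]; have [_ [h1 [h2 _]]] := violated_atomP pi.
Qed.

Lemma refuting_exists : exists g, refuting n g.
Proof.
apply: NNPP => no_refuting; apply: not_pp_Low; exists violated_atoms => x.
pose h k := x (inord k).
have hx (i : 'I_3) : h i = x i by rewrite /h inord_val.
rewrite (_ : LowRel le x = Low le (h 0) (h 1) (h 2)) //; split.
- move=> /Low_arg_image [s [al [s_arg [al_aut E]]]].
  exists (fun k => al (s k)); split=> [i|t /violated_atoms_hold [h1 h2]].
    by rewrite E // hx.
  by apply: (atom_holds_aut Hred a al_aut); case: s_arg => ->.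
- move=> [v [vx v_atoms]]; apply: NNPP => not_Low; apply: no_refuting.
  exists v; split=> [t t_below h1 h2|].
  + apply: NNPP => not_t.
    have [below [_ [_ witness]]] := violated_atomP (order_pattern m v).
    have [g [Eg not_g]] := witness (ex_intro _ t (ex_intro _ v
      (conj erefl (conj t_below (conj h1 (conj h2 not_t)))))).
    have [al [al_aut E]] := homogeneous_on HP (order_pattern_le (esym Eg)).
    apply: not_g; apply: (atom_holds_eq_on below E).
    apply: (atom_holds_aut Hred a al_aut); apply: v_atoms.
    by apply: List.in_map; apply: mem_In; rewrite mem_enum.
  + by move=> L; apply: not_Low; rewrite /h -!vx !inordK.
Qed.
End Approximation.

Section Compactness.
Hypothesis not_pp_Low : ~ pp_definable R (LowRel le).

Definition extendable n g := forall m, exists h, refuting (m + n) h /\ same_type n g h.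

Lemma extendable_refuting n g : extendable n g -> refuting n g.
Proof.
by move=> g_ext; have [h [h_ref gh]] := g_ext 0; apply: refuting_same_type (same_type_sym gh) h_ref.
Qed.

(* Koenig's lemma: by homogeneity only the finitely many order types of
   approximations matter, so one of them is extendable to every depth. *)
Lemma extendable0 : exists g, extendable 0 g.
Proof.
pose Q m pi := exists h, refuting m h /\ order_pattern 3 h = pi.
have Q_anti m m' pi : (m <= m')%N -> Q m' pi -> Q m pi.
  by move=> mm' [h [h_ref E]]; exists h; split=> //; apply: refuting_mono mm' h_ref.
have Q_ex m : exists pi, Q m pi.
  by have [h h_ref] := refuting_exists not_pp_Low m; exists (order_pattern 3 h), h.
have [pi Q_pi] := finite_antitone_witness Q_anti Q_ex.
have [h0 [_ E0]] := Q_pi 0.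
exists h0 => m; have [h [h_ref E]] := Q_pi m.
by exists h; rewrite addn0; split=> //; apply: order_pattern_le; rewrite E E0.
Qed.

Lemma extendable_step n g : extendable n g ->
  exists g', extendable n.+1 g' /\ forall i, (i < n.+3)%N -> g' i = g i.
Proof.
move=> g_ext.
pose Q m pi := exists h, refuting (m + n.+1) h /\ same_type n g h /\ order_pattern n.+4 h = pi.
have Q_anti m m' pi : (m <= m')%N -> Q m' pi -> Q m pi.
  move=> mm' [h [h_ref hE]]; exists h; split=> //.
  by apply: refuting_mono h_ref; rewrite leq_add2r.
have Q_ex m : exists pi, Q m pi.
  have [h [h_ref gh]] := g_ext m.+1; exists (order_pattern n.+4 h), h.
  by rewrite addSnnS in h_ref.
have [pi Q_pi] := finite_antitone_witness Q_anti Q_ex.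
have [h0 [_ [gh0 E0]]] := Q_pi 0.
have [al [[_ al_le] E]] := homogeneous_on HP (same_type_sym gh0).
exists (fun k => al (h0 k)); split=> [m|i i_lt]; last by rewrite E.
have [h [h_ref [_ E1]]] := Q_pi m.
exists h; split=> // i j i_lt j_lt; rewrite -al_le.
by apply: (order_pattern_le (m := n.+4)); rewrite ?E1.
Qed.

Definition start : {g | extendable 0 g} := constructive_indefinite_description _ extendable0.
Definition next n (g : {g | extendable n g}) :
  {g' | extendable n.+1 g' /\ forall i, (i < n.+3)%N -> g' i = sval g i} :=
  constructive_indefinite_description _ (extendable_step (svalP g)).
Fixpoint chain n : {g | extendable n g} :=
  match n with
  | 0 => start
  | k.+1 => exist _ (sval (next (chain k))) (proj1 (svalP (next (chain k))))
  end.

Lemma chain_agree n d i : (i < n.+3)%N -> sval (chain (d + n)) i = sval (chain n) i.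
Proof.
move=> i_lt; elim: d => [//|d IH].
rewrite addSn /= -IH; apply: (proj2 (svalP (next (chain (d + n))))).
by apply: leq_trans i_lt _; rewrite !ltnS leq_addl.
Qed.

Definition limit (i : nat) : P := sval (chain i) i.

Lemma limit_agree n i : (i < n.+3)%N -> limit i = sval (chain n) i.
Proof.
move=> i_lt; rewrite /limit; case: (leqP i n) => h.
- by rewrite -(subnK h) chain_agree // !ltnS leqW.
- by have := chain_agree (i - n) i_lt; rewrite (subnK (ltnW h)).
Qed.

Lemma limit_atoms t : atom_holds R arg1 t -> atom_holds R arg2 t -> atom_holds R limit t.
Proof.
move=> h1 h2; have [N t_below] := exists_atom_below t.
have t_below' : atom_below N.+3 t by apply: atom_below_mono t_below; rewrite !leqW.
have [chain_atoms _] := extendable_refuting (svalP (chain N)).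
apply: (atom_holds_eq_on t_below' (fun i i_lt => esym (limit_agree i_lt))).
exact: chain_atoms.
Qed.

Lemma limit_not_Low : ~ Low le (limit 0) (limit 1) (limit 2).
Proof.
have [_ chain_Low] := extendable_refuting (svalP (chain 0)).
by rewrite !(limit_agree (n := 0)).
Qed.

Definition limit_op (x y : P) : P := limit (pair_code (x, y)).+3.

Lemma limit_op_polymorphism : binary_polymorphism R limit_op.
Proof.
move=> i t Ht /=.
have := limit_atoms (t := @ARel I ar i (fun k => (pair_code (t ord0 k, t ord_max k)).+3)).
have E1 : (fun k => arg1 (pair_code (t ord0 k, t ord_max k)).+3) = t ord0.
  by apply: functional_extensionality => k /=; rewrite pair_codeK.
have E2 : (fun k => arg2 (pair_code (t ord0 k, t ord_max k)).+3) = t ord_max.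
  by apply: functional_extensionality => k /=; rewrite pair_codeK.
by apply; rewrite /= ?E1 ?E2.
Qed.

Lemma limit_opE k : limit k = limit_op (arg1 k) (arg2 k).
Proof.
by have := limit_atoms (t := AEq ar k (pair_code (arg1 k, arg2 k)).+3);
  rewrite /= pair_codeK; apply.
Qed.

Lemma refuting_polymorphism :
  exists f, binary_polymorphism R f /\ ~ Low le (f a a) (f b c) (f c b).
Proof.
exists limit_op; split; first exact: limit_op_polymorphism.
by rewrite -(limit_opE 0) -(limit_opE 1) -(limit_opE 2); apply: limit_not_Low.
Qed.
End Compactness.

End LowRefutingPolymorphism.

Theorem lemma45 (P : Type) (le : P -> P -> Prop)
  (HP : random_partial_order le)
  (I : Type) (ar : I -> nat) (R : forall i : I, ('I_(ar i) -> P) -> Prop)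
  (Hred : reduct le R)
  (Hlt : pp_definable R (LtRel le))
  (Hinc : pp_definable R (IncompRel le)) :
  pp_definable R (LowRel le) <->
  (forall f : P -> P -> P, binary_polymorphism R f -> dominated le f).
Proof.
split=> [Low_pp f f_pol | all_dominated].
  apply: (preserving_lt_Low_dominated HP).
    exact: binary_polymorphism_lt Hlt f_pol.
  exact: binary_polymorphism_Low Low_pp f_pol.
apply: NNPP => not_pp.
have [a] := rpo_inhabited HP.
have [b [ab _]] := exists_upper_bound HP a a.
have [c [ca [cb _]]] := exists_incomp3 HP a b b.
have [_ [[cnt cnt_inj] _]] := HP.
have [f [f_pol not_Low]] := refuting_polymorphism HP Hred ab ca cb cnt_inj not_pp.
exact: not_Low (dominated_Low (all_dominated f f_pol) ab ca cb ab ca cb).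
Qed.
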